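(* Let $G=(\mathfrak{N},\mathfrak{T},\mathfrak{R},\mathfrak{S})$ be a context-free grammar, $\Sigma$ a set of characters and $(\textsl{Lex},\textsl{Sel})$ a local lexing. For every input $D\in\Sigma^*$, every $k\in\{0,\ldots,|D|\}$ and every $u\in\{0,1,2,\ldots\}$: if $p,q\in\mathcal{P}_k^u$ and there is $n\in\{0,\ldots,|q|\}$ with $|\overline{p}|=|\overline{q_0\ldots q_{n-1}}|\le k$ and $[p\,q_n\ldots q_{|q|-1}]\in\mathcal{L}_{\text{prefix}}$, then $p\,q_n\ldots q_{|q|-1}\in\mathcal{P}_k^u$.
   Context: Notation: for a set $U$, $U^*$ is the set of finite sequences over $U$, $\varepsilon$ the empty sequence, juxtaposition is concatenation, $|\alpha|$ the length and $\alpha_i$ ($0\le i<|\alpha|$) the $i$-th element. A context-free grammar $(\mathfrak{N},\mathfrak{T},\mathfrak{R},\mathfrak{S})$ has disjoint nonterminals $\mathfrak{N}$ and terminals $\mathfrak{T}$, rules $\mathfrak{R}\subseteq\mathfrak{N}\times(\mathfrak{N}\cup\mathfrak{T})^*$ (written $N\rightarrow\alpha$), start symbol $\mathfrak{S}$; $\overset{*}{\Rightarrow}$ is the reflexive-transitive closure of one-step rewriting by rules. $\mathcal{L}_{\text{prefix}}=\{w\in\mathfrak{T}^*\mid\exists\alpha\in(\mathfrak{N}\cup\mathfrak{T})^*.\ \mathfrak{S}\overset{*}{\Rightarrow}w\alpha\}$. Tokens: a token is a pair $x=(t,c)\in\mathfrak{T}\times\Sigma^*$; $[x]=t$, $\overline{x}=c$.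 For a token sequence (path) $q=x_0\ldots x_r$, $[q]=[x_0]\ldots[x_r]$ and $\overline{q}=\overline{x_0}\ldots\overline{x_r}$. Local lexing: a pair $(\textsl{Lex},\textsl{Sel})$ where $\textsl{Lex}$ assigns to each $t\in\mathfrak{T}$ a function $\textsl{Lex}(t)$ which, given $D\in\Sigma^*$ and $k\in\{0,\ldots,|D|\}$, returns a set of tokens $(t,c)$ with $k+|c|\le|D|$ and $c_i=D_{k+i}$ for $0\le i\le|c|-1$; and $\textsl{Sel}$ maps any two token sets $A\subseteq B$ to a token set with $A\subseteq\textsl{Sel}(A,B)\subseteq B$. Path sets: $\operatorname{limit} f\,X=\bigcup_{n\ge0}f^n(X)$. $\operatorname{Append}_k\,T\,P=P\cup\{pt\mid p\in P,\ |\overline{p}|=k,\ t\in T,\ [pt]\in\mathcal{L}_{\text{prefix}}\}$. For $k\in\{0,\ldots,|D|\}$: $\mathcal{X}_k=\{x\in\mathfrak{T}\times\Sigma^*\mid x\in\textsl{Lex}([x])(D,k)\}$; $\mathcal{P}_0^0=\{\varepsilon\}$; $\mathcal{W}_k^u=\{x\in\mathcal{X}_k\mid\exists p\in\mathcal{P}_k^u.\ |\overline{p}|=k\wedge[px]\in\mathcal{L}_{\text{prefix}}\}$; $\mathcal{Z}_k^0=\emptyset$; $\mathcal{Z}_k^{u+1}=\textsl{Sel}(\mathcal{Z}_k^u,\mathcal{W}_k^u)$; $\mathcal{P}_k^{u+1}=\operatorname{limit}(\operatorname{Append}_k\,\mathcal{Z}_k^{u+1})\,\mathcal{P}_k^u$;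 $\mathcal{P}_k^\infty=\bigcup_u\mathcal{P}_k^u$; $\mathcal{P}_{k+1}^0=\mathcal{P}_k^\infty$. *)

(* Sets are represented as predicates (_ -> Prop). *)
From Stdlib Require Import List Arith Relations.
Import ListNotations.
Set Implicit Arguments.

Section LocalLexing.
Variables (Nt Tm Sigma : Type).

Definition symbol := (Nt + Tm)%type.

Definition derives1 (R : Nt -> list symbol -> Prop) (a b : list symbol) : Prop :=
  exists (l r : list symbol) (N : Nt) (alpha : list symbol),
    R N alpha /\ a = l ++ inl N :: r /\ b = l ++ alpha ++ r.

Definition derives (R : Nt -> list symbol -> Prop) : relation (list symbol) :=
  clos_refl_trans (list symbol) (derives1 R).

Definition Lprefix (R : Nt -> list symbol -> Prop) (St : Nt) (w : list Tm) : Prop :=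
  exists alpha : list symbol, derives R [inl St] (map inr w ++ alpha).

(* tokens x = (t, c); [x] = fst x, overline x = snd x *)
Definition token := (Tm * list Sigma)%type.
Definition path := list token.
Definition terms (q : path) : list Tm := map fst q.
Definition chars (q : path) : list Sigma := concat (map snd q).

Definition lexer := Tm -> list Sigma -> nat -> token -> Prop.
Definition selector := (token -> Prop) -> (token -> Prop) -> (token -> Prop).

Definition lex_ok (Lex : lexer) : Prop :=
  forall (t : Tm) (D : list Sigma) (k : nat) (x : token),
    k <= length D -> Lex t D k x ->
    fst x = t /\ k + length (snd x) <= length D /\
    (forall i, i < length (snd x) -> nth_error (snd x) i = nth_error D (k + i)).

Definition sel_ok (Sel : selector) : Prop :=
  forall A B : token -> Prop, (forall x, A x -> B x) ->
    (forall x, A x -> Sel A B x) /\ (forall x, Sel A B x -> B x).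

Definition local_lexing (Lex : lexer) (Sel : selector) : Prop :=
  lex_ok Lex /\ sel_ok Sel.

Variables (R : Nt -> list symbol -> Prop) (St : Nt) (Lex : lexer) (Sel : selector)
          (D : list Sigma).

Definition limit (f : (path -> Prop) -> (path -> Prop)) (X : path -> Prop) : path -> Prop :=
  fun q => exists n, Nat.iter n f X q.

Definition Append (k : nat) (Tset : token -> Prop) (P : path -> Prop) : path -> Prop :=
  fun q => P q \/
    exists p t, P p /\ length (chars p) = k /\ Tset t /\
                Lprefix R St (terms (p ++ [t])) /\ q = p ++ [t].

Definition Xk (k : nat) : token -> Prop := fun x => Lex (fst x) D k x.

Definition Wk (k : nat) (P : path -> Prop) : token -> Prop :=
  fun x => Xk k x /\ exists p, P p /\ length (chars p) = k /\ Lprefix R St (terms (p ++ [x])).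

Fixpoint ZP (k : nat) (P0 : path -> Prop) (u : nat) : (token -> Prop) * (path -> Prop) :=
  match u with
  | 0 => (fun _ => False, P0)
  | S u' =>
      let (Z, P) := ZP k P0 u' in
      let Z' := Sel Z (Wk k P) in
      (Z', limit (Append k Z') P)
  end.

Fixpoint P0 (k : nat) : path -> Prop :=
  match k with
  | 0 => fun q => q = []
  | S k' => fun q => exists u, snd (ZP k' (P0 k') u) q
  end.

Definition Pku (k u : nat) : path -> Prop := snd (ZP k (P0 k) u).

End LocalLexing.

From Stdlib Require Import List Arith Lia Relations.
Import ListNotations.

(* A path of P_k^u is characterised locally: [q] is in L_prefix, and every
   token x of q starting at character offset i lies in some Z_i^v if i < k and in
   Z_k^u if i = k (no token starts beyond k).  This condition only looks at
   the offsets of the tokens, and splicing the suffix of q after p keeps them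
   because |p| = |q_0 .. q_(n-1)|.  The converse direction rebuilds a path
   token by token; a token at offset i < k is appended in a stage P_i^u' whose
   u' bounds the stages needed by the finitely many tokens at offset i. *)

Section Characterisation.

Context {Nt Tm Sigma : Type}.
Variables (R : Nt -> list (symbol Nt Tm) -> Prop) (St : Nt)
  (Lex : lexer Tm Sigma) (Sel : selector Tm Sigma) (D : list Sigma).
Hypothesis Sel_ok : sel_ok Sel.

Local Notation P := (Pku R St Lex Sel D).
Local Notation W := (Wk R St Lex D).
Local Notation Lpre := (Lprefix R St).
Local Notation tpath := (path Tm Sigma).

Definition Zku (k u : nat) : token Tm Sigma -> Prop :=
  fst (ZP R St Lex Sel D k (P0 R St Lex Sel D k) u).

Lemma Zku_0 {k x} : ~ Zku k 0 x.
Proof. intros []. Qed.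

Lemma Zku_S k u : Zku k (S u) = Sel (Zku k u) (W k (P k u)).
Proof.
  unfold Zku, Pku. simpl. destruct (ZP R St Lex Sel D k (P0 R St Lex Sel D k) u).
  reflexivity.
Qed.

Lemma Pku_S k u : P k (S u) = limit (Append R St k (Zku k (S u))) (P k u).
Proof.
  unfold Zku, Pku. simpl. destruct (ZP R St Lex Sel D k (P0 R St Lex Sel D k) u).
  reflexivity.
Qed.

Lemma terms_app (p r : tpath) : terms (p ++ r) = terms p ++ terms r.
Proof. apply map_app. Qed.

Lemma Lprefix_nil : Lpre [].
Proof. exists [inl St]. apply rt_refl. Qed.

Lemma Lprefix_app_l {w v} : Lpre (w ++ v) -> Lpre w.
Proof.
  intros [alpha H]. exists (map inr v ++ alpha).
  rewrite map_app, <- app_assoc in H. exact H.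
Qed.

Lemma limit_Append_snoc {k T} {X : tpath -> Prop} {p t} :
  limit (Append R St k T) X p -> length (chars p) = k -> T t ->
  Lpre (terms (p ++ [t])) -> limit (Append R St k T) X (p ++ [t]).
Proof. intros [m H] Hc Ht Hl. exists (S m). right. exists p, t. auto. Qed.

Lemma limit_Append_ind k T (X Inv : tpath -> Prop) :
  (forall q, X q -> Inv q) ->
  (forall p t, Inv p -> length (chars p) = k -> T t ->
     Lpre (terms (p ++ [t])) -> Inv (p ++ [t])) ->
  forall q, limit (Append R St k T) X q -> Inv q.
Proof.
  intros Hbase Hstep q [m Hm]. revert q Hm.
  induction m as [|m IH]; intros q Hm; [exact (Hbase q Hm)|].
  destruct Hm as [Hm | (p & t & Hp & Hc & Ht & Hl & ->)]; auto.
Qed.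

Lemma Pku_mono k u u' q : u <= u' -> P k u q -> P k u' q.
Proof.
  induction 1 as [|u' _ IH]; auto.
  intros Hq. rewrite Pku_S. exists 0. exact (IH Hq).
Qed.

Lemma Wk_mono k (X Y : tpath -> Prop) x :
  (forall q, X q -> Y q) -> W k X x -> W k Y x.
Proof. intros HXY [Hx (p & Hp & Hc & Hl)]. split; [exact Hx|]. exists p. auto. Qed.

Lemma Zku_sub_Wk k u x : Zku k u x -> W k (P k u) x.
Proof.
  revert x. induction u as [|u IH]; intros x Hx; [destruct (Zku_0 Hx)|].
  rewrite Zku_S in Hx. apply Wk_mono with (X := P k u); [intros q; apply Pku_mono; lia|].
  exact (proj2 (Sel_ok _ _ IH) x Hx).
Qed.

Lemma Zku_mono {k u u' x} : u <= u' -> Zku k u x -> Zku k u' x.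
Proof.
  induction 1 as [|u' _ IH]; auto.
  intros Hx. rewrite Zku_S. exact (proj1 (Sel_ok _ _ (@Zku_sub_Wk k u')) x (IH Hx)).
Qed.

Lemma Pku_lift j k u' u q : j < k -> P j u' q -> P k u q.
Proof.
  revert u. induction k as [|k IH]; intros u Hjk Hq; [lia|].
  apply (Pku_mono (S k) 0); [lia|].
  destruct (Nat.eq_dec j k) as [->|ne]; [exists u'; exact Hq|].
  exists 0. apply IH; [lia|exact Hq].
Qed.

Lemma Pku_nil k u : P k u [].
Proof.
  apply (Pku_mono k 0); [lia|].
  induction k as [|k IH]; [reflexivity|]. exists 0. exact IH.
Qed.

Lemma Pku_snoc {k u q t} :
  P k u q -> length (chars q) = k -> Zku k u t -> Lpre (terms (q ++ [t])) ->
  P k u (q ++ [t]).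
Proof.
  destruct u as [|u]; intros Hq Hc Ht Hl; [destruct (Zku_0 Ht)|].
  revert Hq. rewrite !Pku_S. intros Hq. exact (limit_Append_snoc Hq Hc Ht Hl).
Qed.

Definition selected (k u i : nat) (x : token Tm Sigma) : Prop :=
  (i < k /\ exists v, Zku i v x) \/ (i = k /\ Zku k u x).

Fixpoint selected_from (k u i : nat) (q : tpath) : Prop :=
  match q with
  | [] => True
  | x :: q' => selected k u i x /\ selected_from k u (i + length (snd x)) q'
  end.

Lemma selected_mono {k u u' i x} : u <= u' -> selected k u i x -> selected k u' i x.
Proof.
  intros Hu [Hx | [-> Hx]]; [left; exact Hx|].
  right. split; [reflexivity|]. exact (Zku_mono Hu Hx).
Qed.

Lemma selected_succ {k u} u' {i x} : selected k u i x -> selected (S k) u' i x.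
Proof.
  intros [[Hi Hx] | [-> Hx]]; left; split; auto. exists u. exact Hx.
Qed.

Lemma selected_from_app k u i p r :
  selected_from k u i (p ++ r) <->
  selected_from k u i p /\ selected_from k u (i + length (chars p)) r.
Proof.
  revert i. induction p as [|x p IH]; intros i; simpl.
  - rewrite Nat.add_0_r. tauto.
  - change (chars (x :: p)) with (snd x ++ chars p).
    rewrite IH, length_app, Nat.add_assoc. tauto.
Qed.

Lemma selected_from_skipn {k u i} n {q} :
  selected_from k u i q ->
  selected_from k u (i + length (chars (firstn n q))) (skipn n q).
Proof.
  intros H. rewrite <- (firstn_skipn n q) in H.
  apply selected_from_app in H. exact (proj2 H).
Qed.

Lemma selected_from_mono {k u u' i q} :
  u <= u' -> selected_from k u i q -> selected_from k u' i q.
Proof.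
  intros Hu. revert i. induction q as [|x q IH]; intros i; simpl; [tauto|].
  intros [Hx Hq]. split; [exact (selected_mono Hu Hx) | exact (IH _ Hq)].
Qed.

Lemma selected_from_succ {k u} u' {i q} :
  selected_from k u i q -> selected_from (S k) u' i q.
Proof.
  revert i. induction q as [|x q IH]; intros i; simpl; [tauto|].
  intros [Hx Hq]. split; [exact (selected_succ u' Hx) | exact (IH _ Hq)].
Qed.

(* Once q ends before k, only its tokens starting at its end offset need a
   fixed stage; there are finitely many, so their maximal stage U works. *)
Lemma selected_from_bound {k u i q} :
  i + length (chars q) < k -> selected_from k u i q ->
  exists U, selected_from (i + length (chars q)) U i q.
Proof.
  revert i. induction q as [|x q IH]; intros i Hlt Hs; [exists 0; exact I|].
  change (chars (x :: q)) with (snd x ++ chars q) in *.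
  rewrite length_app, Nat.add_assoc in *.
  destruct Hs as [[[_ [v Hv]] | [Hi _]] Hq]; [|lia].
  destruct (IH _ Hlt Hq) as [U HU].
  exists (max v U). split; [|exact (selected_from_mono (Nat.le_max_r v U) HU)].
  destruct (Nat.eq_dec i (i + length (snd x) + length (chars q))) as [e|ne].
  - right. split; [exact e|]. rewrite <- e. exact (Zku_mono (Nat.le_max_l v U) Hv).
  - left. split; [lia|]. exists v. exact Hv.
Qed.

Lemma Pku_selected_S k u :
  (forall q, P k u q -> Lpre (terms q) /\ selected_from k u 0 q) ->
  forall q, P k (S u) q -> Lpre (terms q) /\ selected_from k (S u) 0 q.
Proof.
  intros IH q Hq. rewrite Pku_S in Hq. revert q Hq. apply limit_Append_ind.
  - intros q Hq. destruct (IH q Hq) as [Hl Hs].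
    split; [exact Hl | exact (selected_from_mono (Nat.le_succ_diag_r u) Hs)].
  - intros p t [_ Hp] Hc Ht Hl. split; [exact Hl|].
    apply selected_from_app. split; [exact Hp|].
    split; [|exact I]. right. split; [exact Hc | exact Ht].
Qed.

Lemma Pku_selected k u q : P k u q -> Lpre (terms q) /\ selected_from k u 0 q.
Proof.
  revert u q. induction k as [|k IHk]; intros u; induction u as [|u IHu]; intros q Hq.
  2, 4: exact (Pku_selected_S _ u IHu q Hq).
  - cbn in Hq. subst q. split; [apply Lprefix_nil | exact I].
  - destruct Hq as [u' Hq]. destruct (IHk u' q Hq) as [Hl Hs].
    split; [exact Hl | exact (selected_from_succ 0 Hs)].
Qed.

Lemma selected_Pku q : forall k u,
  Lpre (terms q) -> selected_from k u 0 q -> P k u q.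
Proof.
  induction q as [|x q IH] using rev_ind; intros k u Hl Hs; [apply Pku_nil|].
  apply selected_from_app in Hs as [Hq [Hx _]]. simpl in Hx.
  assert (Hlq : Lpre (terms q)) by (rewrite terms_app in Hl; exact (Lprefix_app_l Hl)).
  destruct Hx as [[Hlt [v Hv]] | [Hc Hx]].
  - destruct (@selected_from_bound k u 0 q Hlt Hq) as [U HU].
    apply (Pku_lift (length (chars q)) k (max U v)); [exact Hlt|].
    apply Pku_snoc; [| reflexivity | exact (Zku_mono (Nat.le_max_r U v) Hv) | exact Hl].
    apply IH; [exact Hlq|]. exact (selected_from_mono (Nat.le_max_l U v) HU).
  - exact (Pku_snoc (IH k u Hlq Hq) Hc Hx Hl).
Qed.

Theorem Pku_iff k u q : P k u q <-> Lpre (terms q) /\ selected_from k u 0 q.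
Proof.
  split; [apply Pku_selected|]. intros [Hl Hs]. exact (selected_Pku q k u Hl Hs).
Qed.

End Characterisation.

Theorem theorem3 (Nt Tm Sigma : Type)
  (R : Nt -> list (symbol Nt Tm) -> Prop) (S : Nt)
  (Lex : lexer Tm Sigma) (Sel : selector Tm Sigma)
  (HLL : local_lexing Lex Sel)
  (D : list Sigma) (k u : nat) (Hk : k <= length D)
  (p q : path Tm Sigma)
  (Hp : Pku R S Lex Sel D k u p) (Hq : Pku R S Lex Sel D k u q)
  (n : nat) (Hn : n <= length q)
  (Hlen : length (chars p) = length (chars (firstn n q)))
  (Hlek : length (chars p) <= k)
  (Hpre : Lprefix R S (terms (p ++ skipn n q))) :
  Pku R S Lex Sel D k u (p ++ skipn n q).
Proof.
  destruct HLL as [_ Sel_ok].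
  apply (Pku_iff R S Lex Sel D Sel_ok) in Hp as [_ Hp].
  apply (Pku_iff R S Lex Sel D Sel_ok) in Hq as [_ Hq].
  apply (Pku_iff R S Lex Sel D Sel_ok). split; [exact Hpre|].
  apply selected_from_app. split; [exact Hp|].
  rewrite Hlen. apply selected_from_skipn, Hq.
Qed.
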